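(* Let $b\ge1$, $1\le a\le b$, $t\ge0$ be integers and $d=2t+1$. Let $\nu=\nu^{\text{on-diag}}+\nu^{\text{off-diag}}$, where $\nu^{\text{on-diag}}$ is the number of pairs $(k,q)$ with $k$ odd, $1\le k<d$, $0\le q\le k$, $q\equiv0\pmod{2b}$, and $\nu^{\text{off-diag}}$ is the number of pairs $(k,q)$ with $k$ odd, $1\le k<d$, $-k\le q\le k$, $q\equiv2a-1\pmod{2b}$. Then $\nu=\tfrac{3}{2b}t^2+\tfrac{2+b}{2b}t+\tfrac{2a(a-b-1)+b+1}{2b}+c$, where $c=\tfrac{1}{2b}\Big([t+1-a]_b^2+\big(b-2-2[t-a]_b\big)[t+1-a]_b+[a+t]_b\big(b-2-2[a+t-1]_b+[a+t]_b\big)+[t]_b^2+\big(b-1-2[t-\tfrac12]_b\big)[t]_b\Big)$, and $0\le c\le 3b$.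
   Context: For real $x$ and positive integer $y$, $[x]_y:=x\bmod y=x-y\lfloor x/y\rfloor$. The quantity $\nu$ is the number of quadratic Knill–Laflamme conditions a real $(\mathsf{BD}_{2b},\delta_a)$-covariant spin code must satisfy to have distance $d$. *)

From HB Require Import structures.
From mathcomp Require Import all_boot all_order all_algebra.
Set Implicit Arguments. Unset Strict Implicit. Unset Printing Implicit Defensive.
Import Order.TTheory GRing.Theory Num.Theory.
Local Open Scope ring_scope.

Definition rmod (x : rat) (y : nat) : rat :=
  x - y%:R * (Num.floor (x / y%:R))%:~R.

Definition nu_on (b d : nat) : nat :=
  (\sum_(0 <= k < d | odd k && (1 <= k)%N)
     \sum_(0 <= q < k.+1 | (2 * b %| q)%N) 1)%N.

(* number of pairs (k,q), k odd, 1 <= k < d, -k <= q <= k, q = 2a-1 mod 2b;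
   q is written as j - k with 0 <= j <= 2k *)
Definition nu_off (a b d : nat) : nat :=
  (\sum_(0 <= k < d | odd k && (1 <= k)%N)
     \sum_(0 <= j < (2 * k).+1 |
        ((2 * b)%N%:Z %| ((j%:Z - k%:Z) - (2 * a%:Z - 1))%R)%Z) 1)%N.

Definition nu (a b d : nat) : nat := (nu_on b d + nu_off a b d)%N.

(* Counting the q in an interval with a prescribed residue gives differences of
   floors, so nu (2t+3) - nu (2t+1) = [t/b] + [(t+1-a)/b] + [(a+t)/b] + 2.  The
   tent function g y = [y]_b (b - [y]_b) satisfies
   g (y+1) - g y = 2b [y/b] - 2y + b - 1, so induction on t gives
   2b nu = 3t^2 + (2+b)t + 2a(a-b-1) + b + 1 + g (t+1-a) + g (a+t) + g t.
   The correction c is (g (t+1-a) + g (a+t) + g t) / 2b, and 0 <= g <= b^2. *)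

From HB Require Import structures.
From mathcomp Require Import all_boot all_order all_algebra zify ring lra.
Import Order.TTheory GRing.Theory Num.Theory.
Local Open Scope ring_scope.

Section IntDivision.

Variable m : int.
Hypothesis m_gt0 : 0 < m.

Lemma divz_unique (x q : int) : q * m <= x < q * m + m -> (x %/ m)%Z = q.
Proof.
move=> /andP[lo hi]; apply/eqP; rewrite eq_le -ltzD1 ltz_divLR // lez_divRL //.
by rewrite lo mulrDl mul1r hi.
Qed.

Lemma modz_unique (x q : int) : q * m <= x < q * m + m -> (x %% m)%Z = x - q * m.
Proof. by move=> /divz_unique qE; rewrite /modz qE. Qed.

Lemma dvdz_divzB1 (x : int) : ((m %| x)%Z : int) = (x %/ m)%Z - ((x - 1) %/ m)%Z.
Proof.
have xE := divz_eq x m; have r_ge0 := modz_ge0 x (lt0r_neq0 m_gt0).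
have r_lt := ltz_pmod x m_gt0.
set q := (x %/ m)%Z in xE *; set r := (x %% m)%Z in xE r_ge0 r_lt.
case: dvdz_mod0P => [r0 | /eqP r_neq0].
  by rewrite (@divz_unique _ (q - 1)) //; lia.
by rewrite (@divz_unique _ q) //; lia.
Qed.

Lemma count_dvdz (c : int) (n : nat) :
  (\sum_(0 <= j < n | (m %| (j%:Z + c)%R)%Z) 1)%N%:Z
  = ((n%:Z + c - 1) %/ m)%Z - ((c - 1) %/ m)%Z.
Proof.
pose f (j : nat) := ((j%:Z + c - 1) %/ m)%Z.
rewrite -natz natr_sum big_mkcond /=.
transitivity (\sum_(0 <= j < n) (f j.+1 - f j)); last by rewrite telescope_sumr // /f add0r.
apply: eq_bigr => j _; rewrite /f; have -> : j.+1%:Z + c - 1 = j%:Z + c by lia.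
by rewrite -dvdz_divzB1; case: (m %| _)%Z.
Qed.

Lemma divz_opp_sub1 (x : int) : ((- x - 1) %/ m)%Z = - (x %/ m)%Z - 1.
Proof.
have := divz_eq x m; have := modz_ge0 x (lt0r_neq0 m_gt0); have := ltz_pmod x m_gt0.
by move=> r_lt r_ge0 xE; apply: divz_unique; lia.
Qed.

End IntDivision.

Lemma divz_double_add1 (m x : int) : 0 < m -> ((2 * x + 1) %/ (2 * m))%Z = (x %/ m)%Z.
Proof.
move=> m_gt0; have := divz_eq x m; have := modz_ge0 x (lt0r_neq0 m_gt0); have := ltz_pmod x m_gt0.
move=> r_lt r_ge0 xE; apply: divz_unique; lia.
Qed.

Definition tent (b : nat) (y : int) : int := (y %% b)%Z * (b%:Z - (y %% b)%Z).

Definition tent_sum (a b t : nat) : int :=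
  tent b (t%:Z + 1 - a%:Z) + tent b (a%:Z + t%:Z) + tent b t.

Section Tent.

Context {b : nat} (b_gt0 : (0 < b)%N).

Let bz_gt0 : 0 < b%:Z. Proof. by []. Qed.

Lemma tent_small (y : int) : 0 <= y <= b%:Z -> tent b y = y * (b%:Z - y).
Proof.
move=> /andP[y_ge0]; rewrite le_eqVlt => /orP[/eqP-> | y_lt].
  by rewrite /tent modzz subrr !mulr0.
by rewrite /tent modz_small ?y_ge0.
Qed.

Lemma tentDr (y : int) : tent b (y + b%:Z) = tent b y.
Proof. by rewrite /tent modzDr. Qed.

Lemma tent_bounds (y : int) : 0 <= tent b y <= b%:Z ^+ 2.
Proof.
have := modz_ge0 y (lt0r_neq0 bz_gt0); have := ltz_pmod y bz_gt0.
rewrite /tent; move: (y %% b)%Z => r r_lt r_ge0; apply/andP; split; nia.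
Qed.

Lemma tent_modz_pred (y : int) :
  tent b y = (y %% b)%Z ^+ 2 + (b%:Z - 2 - 2 * ((y - 1) %% b)%Z) * (y %% b)%Z.
Proof.
have yE := divz_eq y b; have r_ge0 := modz_ge0 y (lt0r_neq0 bz_gt0).
have r_lt := ltz_pmod y bz_gt0.
rewrite /tent; set q := (y %/ b)%Z in yE; set r := (y %% b)%Z in yE r_ge0 r_lt *.
have [-> | r_neq0] := eqVneq r 0; first by ring.
rewrite (@modz_unique _ bz_gt0 _ q); last lia.
have -> : y - 1 - q * b = r - 1 by lia.
ring.
Qed.

Lemma divz_tent (y : int) :
  2 * b%:Z * (y %/ b)%Z = tent b (y + 1) - tent b y + 2 * y - b%:Z + 1.
Proof.
have yE := divz_eq y b; have r_ge0 := modz_ge0 y (lt0r_neq0 bz_gt0).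
have r_lt := ltz_pmod y bz_gt0.
rewrite /tent; set q := (y %/ b)%Z in yE *; set r := (y %% b)%Z in yE r_ge0 r_lt *.
have [r_last | r_not_last] := eqVneq (r + 1) b%:Z.
  rewrite (@modz_unique _ bz_gt0 _ (q + 1)); lia.
rewrite (@modz_unique _ bz_gt0 _ q); lia.
Qed.

Lemma tent_sum_bounds (a t : nat) : 0 <= tent_sum a b t <= 3 * b%:Z ^+ 2.
Proof.
have /andP[? ?] := tent_bounds (t%:Z + 1 - a%:Z).
have /andP[? ?] := tent_bounds (a%:Z + t%:Z).
have /andP[? ?] := tent_bounds t; rewrite /tent_sum; lia.
Qed.

End Tent.

Section Counting.

Variables a b : nat.
Hypothesis b_gt0 : (0 < b)%N.

Let b2z_gt0 : 0 < (2 * b)%N%:Z. Proof. by rewrite ltz_nat muln_gt0. Qed.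

Lemma sum_odd_recr (t : nat) (F : nat -> nat) :
  (\sum_(0 <= k < (2 * t + 1).+2 | odd k && (1 <= k)%N) F k
  = \sum_(0 <= k < 2 * t + 1 | odd k && (1 <= k)%N) F k + F (2 * t + 1))%N.
Proof.
rewrite big_mkcond big_nat_recr // big_nat_recr //= -big_mkcond.
by rewrite addn1 /= oddM addn0.
Qed.

Lemma nu_one : nu a b 1 = 0%N.
Proof. by rewrite /nu /nu_on /nu_off big_mkcond big_nat1 /= big_mkcond big_nat1. Qed.

Lemma nu_step (t : nat) :
  nu a b (2 * t.+1 + 1) = (nu a b (2 * t + 1)
   + \sum_(0 <= q < (2 * t + 1).+1 | (2 * b %| q)%N) 1
   + \sum_(0 <= j < (2 * (2 * t + 1)).+1 |
        ((2 * b)%N%:Z %| ((j%:Z - (2 * t + 1)%N%:Z) - (2 * a%:Z - 1))%R)%Z) 1)%N.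
Proof.
have -> : (2 * t.+1 + 1 = (2 * t + 1).+2)%N by lia.
by rewrite /nu /nu_on /nu_off !sum_odd_recr addnACA addnA.
Qed.

Lemma count_on_diag (t : nat) :
  (\sum_(0 <= q < (2 * t + 1).+1 | (2 * b %| q)%N) 1)%N%:Z = (t%:Z %/ b)%Z + 1.
Proof.
rewrite (eq_bigl (fun q => ((2 * b)%N%:Z %| (q%:Z + 0)%R)%Z)) => [|q]; last by rewrite addr0.
rewrite count_dvdz // (@divz_unique _ b2z_gt0 (0 - 1) (-1)); last lia.
have -> : (2 * t + 1).+1%:Z + 0 - 1 = 2 * t%:Z + 1 by lia.
by rewrite PoszM divz_double_add1 // opprK.
Qed.

Lemma count_off_diag (t : nat) :
  (\sum_(0 <= j < (2 * (2 * t + 1)).+1 |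
        ((2 * b)%N%:Z %| ((j%:Z - (2 * t + 1)%N%:Z) - (2 * a%:Z - 1))%R)%Z) 1)%N%:Z
  = ((t%:Z + 1 - a%:Z) %/ b)%Z + ((a%:Z + t%:Z) %/ b)%Z + 1.
Proof.
rewrite (eq_bigl (fun j => ((2 * b)%N%:Z %| (j%:Z + (- 2 * t%:Z - 2 * a%:Z))%R)%Z)) => [|j].
  rewrite count_dvdz //.
  have -> : (2 * (2 * t + 1)).+1%:Z + (- 2 * t%:Z - 2 * a%:Z) - 1
            = 2 * (t%:Z + 1 - a%:Z) by lia.
  have -> : - 2 * t%:Z - 2 * a%:Z - 1 = 2 * (- (a%:Z + t%:Z) - 1) + 1 by lia.
  rewrite PoszM divzMpl // divz_double_add1 // divz_opp_sub1 //; lia.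
by congr (_ %| _)%Z; lia.
Qed.

Hypotheses (a_ge1 : (1 <= a)%N) (a_le_b : (a <= b)%N).

Lemma nu_closed_form (t : nat) :
  (2 * b)%N%:Z * (nu a b (2 * t + 1))%:Z
  = 3 * t%:Z ^+ 2 + (2 + b%:Z) * t%:Z + 2 * a%:Z * (a%:Z - b%:Z - 1) + b%:Z + 1
    + tent_sum a b t.
Proof.
rewrite /tent_sum.
elim: t => [|t IH].
  have tent_1a : tent b (0%:Z + 1 - a%:Z) = (b%:Z + 1 - a%:Z) * (a%:Z - 1).
    by rewrite -tentDr tent_small; [ring | lia].
  by rewrite muln0 add0n nu_one tent_1a addr0 !tent_small; lia.
have stepT := divz_tent b_gt0 t%:Z.
have step1a := divz_tent b_gt0 (t%:Z + 1 - a%:Z).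
have stepa := divz_tent b_gt0 (a%:Z + t%:Z).
have -> : t.+1%:Z + 1 - a%:Z = t%:Z + 1 - a%:Z + 1 by lia.
have -> : a%:Z + t.+1%:Z = a%:Z + t%:Z + 1 by lia.
have -> : t.+1%:Z = t%:Z + 1 by lia.
rewrite nu_step 2!PoszD 2!mulrDr IH count_on_diag count_off_diag; lia.
Qed.

End Counting.

Section RationalRemainder.

Context {b : nat} (b_gt0 : (0 < b)%N).

Lemma rmod_intD (y : int) (e : rat) :
  0 <= e < 1 -> rmod (y%:~R + e) b = ((y %% b)%Z)%:~R + e.
Proof.
move=> /andP[e_ge0 e_lt1]; have bz_gt0 : 0 < b%:Z by [].
have b_gt0R : 0 < b%:R :> rat by rewrite ltr0n.
have yE := divz_eq y b; have r_ge0 := modz_ge0 y (lt0r_neq0 bz_gt0).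
have r_lt := ltz_pmod y bz_gt0.
set q := (y %/ b)%Z in yE *; set r := (y %% b)%Z in yE r_ge0 r_lt *.
have yR : y%:~R = q%:~R * b%:R + r%:~R :> rat by rewrite {1}yE intrD intrM.
have r_ge0R : 0 <= r%:~R :> rat by rewrite ler0z.
have r_ltR : r%:~R + 1 <= b%:R :> rat.
  by rewrite -[1]/(1%:~R) -intrD -[b%:R]/(b%:Z)%:~R ler_int; lia.
rewrite /rmod (@floor_def _ _ q); first by rewrite yR; ring.
by rewrite intrD ler_pdivlMr // ltr_pdivrMr // yR; apply/andP; split; lra.
Qed.

Lemma rmod_int (y : int) : rmod y%:~R b = ((y %% b)%Z)%:~R.
Proof. by have := @rmod_intD y 0; rewrite !addr0 lexx ltr01; apply. Qed.

Lemma rmod_sub_half (y : int) : rmod (y%:~R - 1 / 2) b = rmod (y - 1)%:~R b + 1 / 2.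
Proof.
have half_in : 0 <= (1 / 2 : rat) < 1 by apply/andP; split; lra.
by rewrite rmod_int -rmod_intD // intrB; congr rmod; field.
Qed.

Lemma rmod_tent (y : int) :
  rmod y%:~R b ^+ 2 + (b%:R - 2 - 2 * rmod (y - 1)%:~R b) * rmod y%:~R b
  = (tent b y)%:~R.
Proof.
by rewrite !rmod_int tent_modz_pred //; ring.
Qed.

End RationalRemainder.

Theorem theoremS3 (a b t : nat) (hb : (1 <= b)%N) (ha : (1 <= a)%N)
    (hab : (a <= b)%N) :
  let d := (2 * t + 1)%N in
  let B : rat := b%:R in
  let A : rat := a%:R in
  let T : rat := t%:R in
  let c : rat :=
    (1 / (2 * B)) *
      (rmod (T + 1 - A) b ^+ 2
       + (B - 2 - 2 * rmod (T - A) b) * rmod (T + 1 - A) b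
       + rmod (A + T) b * (B - 2 - 2 * rmod (A + T - 1) b + rmod (A + T) b)
       + rmod T b ^+ 2
       + (B - 1 - 2 * rmod (T - 1 / 2) b) * rmod T b) in
  (nu a b d)%:R = 3 / (2 * B) * T ^+ 2 + (2 + B) / (2 * B) * T
                  + (2 * A * (A - B - 1) + B + 1) / (2 * B) + c
  /\ 0 <= c <= 3 * B.
Proof.
move=> d B A T c.
have B_gt0 : 0 < B by rewrite ltr0n.
have c_tent : c = (tent_sum a b t)%:~R / (2 * B).
  have E1 : T + 1 - A = (t%:Z + 1 - a%:Z)%:~R by ring.
  have E1' : T - A = (t%:Z + 1 - a%:Z - 1)%:~R by ring.
  have E2 : A + T = (a%:Z + t%:Z)%:~R by ring.
  have E2' : A + T - 1 = (a%:Z + t%:Z - 1)%:~R by ring.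
  rewrite /c /tent_sum 2!intrD -!rmod_tent // E1 E1' E2' E2 -[T]/(t%:Z%:~R).
  by rewrite rmod_sub_half //; field; lra.
have tent_sum_boundsR : 0 <= ((tent_sum a b t)%:~R : rat) <= 3 * B ^+ 2.
  have -> : 3 * B ^+ 2 = (3 * b%:Z ^+ 2)%:~R by ring.
  by rewrite ler0z ler_int tent_sum_bounds.
split.
  have nuE : (nu a b d)%:R = ((2 * b)%N%:Z * (nu a b d)%:Z)%:~R / (2 * B).
    by rewrite intrM; field; lra.
  by rewrite nuE nu_closed_form // c_tent; field; lra.
rewrite c_tent; apply/andP; split; first by apply: divr_ge0; lra.
rewrite ler_pdivrMr; nra.
Qed.
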